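(* Let $(A,\circ,[\cdot,\cdot])$ be a finite-dimensional dual pre-Poisson algebra and $(V;l_\circ,r_\circ,l_{[\cdot,\cdot]},r_{[\cdot,\cdot]})$ a finite-dimensional representation of it. Let $\hat A=A\oplus V^*$ with the dual pre-Poisson algebra structure $(x+u^* )\circ(y+v^* )=x\circ y-l_\circ^*(x)v^*+(-l_\circ^*+r_\circ^* )(y)u^*$, $[x+u^*,y+v^*]=[x,y]+l_{[\cdot,\cdot]}^*(x)v^*-(l_{[\cdot,\cdot]}^*+r_{[\cdot,\cdot]}^* )(y)u^*$. Let $T:V\to A$ be linear, identified with an element of $A\otimes V^*\subseteq\hat A\otimes\hat A$ via $\mathrm{Hom}(V,A)\cong A\otimes V^*$. Then $r=T+\tau(T)$ is a solution of the permutative-Leibniz Yang–Baxter equation in $\hat A$ if and only if $T$ is an $\mathcal{O}$-operator on $(A,\circ,[\cdot,\cdot])$ associated to $(V;l_\circ,r_\circ,l_{[\cdot,\cdot]},r_{[\cdot,\cdot]})$.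
   Context: Field $\mathbb{F}$ of characteristic $0$. $\tau$ is the flip $u\otimes v\mapsto v\otimes u$; for $f:A\to\mathrm{End}(V)$, $\langle f^*(x)v^*,u\rangle=-\langle v^*,f(x)u\rangle$; the identification sends $T$ to $\sum_k T(v_k)\otimes v_k^*$ for a basis $\{v_k\}$ of $V$ with dual basis $\{v_k^*\}$. Dual pre-Poisson algebra: $x\circ(y\circ z)=(x\circ y)\circ z=(y\circ x)\circ z$; $[x,[y,z]]=[[x,y],z]+[y,[x,z]]$; $[x,y\circ z]=[x,y]\circ z+y\circ[x,z]$; $[x\circ y,z]=x\circ[y,z]+y\circ[x,z]$; $[x,y]\circ z=-[y,x]\circ z$. A representation $(V;l_\circ,r_\circ,l_{[\cdot,\cdot]},r_{[\cdot,\cdot]})$: linear maps $A\to\mathrm{End}(V)$ with, for all $x,y$: $r_\circ(x)r_\circ(y)=r_\circ(y\circ x)=l_\circ(y)r_\circ(x)=r_\circ(x)l_\circ(y)$; $l_\circ(x\circ y)=l_\circ(x)l_\circ(y)=l_\circ(y)l_\circ(x)$; $l_{[\cdot,\cdot]}([x,y])=l_{[\cdot,\cdot]}(x)l_{[\cdot,\cdot]}(y)-l_{[\cdot,\cdot]}(y)l_{[\cdot,\cdot]}(x)$; $r_{[\cdot,\cdot]}([x,y])=r_{[\cdot,\cdot]}(y)r_{[\cdot,\cdot]}(x)+l_{[\cdot,\cdot]}(x)r_{[\cdot,\cdot]}(y)$; $r_{[\cdot,\cdot]}(x)r_{[\cdot,\cdot]}(y)=-r_{[\cdot,\cdot]}(x)l_{[\cdot,\cdot]}(y)$;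 $r_{[\cdot,\cdot]}(x\circ y)=r_\circ(y)r_{[\cdot,\cdot]}(x)+l_\circ(x)r_{[\cdot,\cdot]}(y)$; $l_{[\cdot,\cdot]}(x)r_\circ(y)=r_\circ(y)l_{[\cdot,\cdot]}(x)+r_\circ([x,y])$; $l_{[\cdot,\cdot]}(x)l_\circ(y)=l_\circ([x,y])+l_\circ(y)l_{[\cdot,\cdot]}(x)$; $r_{[\cdot,\cdot]}(x)r_\circ(y)=r_\circ([y,x])+l_\circ(y)r_{[\cdot,\cdot]}(x)$; $l_{[\cdot,\cdot]}(x\circ y)=l_\circ(x)l_{[\cdot,\cdot]}(y)+l_\circ(y)l_{[\cdot,\cdot]}(x)$; $r_{[\cdot,\cdot]}(x)(l_\circ-r_\circ)(y)=0$; $r_\circ(x)(l_{[\cdot,\cdot]}+r_{[\cdot,\cdot]})(y)=0$; $l_\circ([x,y]+[y,x])=0$. An $\mathcal{O}$-operator associated to it is a linear $T:V\to A$ with $T(u)\circ T(v)=T(l_\circ(T(u))v+r_\circ(T(v))u)$ and $[T(u),T(v)]=T(l_{[\cdot,\cdot]}(T(u))v+r_{[\cdot,\cdot]}(T(v))u)$. PLYBE in a dual pre-Poisson algebra $B$: with $x\blacksquare y=x\circ y-y\circ x$, $x\square y=[x,y]+[y,x]$ and $r=\sum_i a_i\otimes b_i\in B\otimes B$, $\mathbf{P}(r)=\sum_{i,j}\big(a_i\otimes a_j\otimes b_i\circ b_j-a_i\otimes b_i\circ a_j\otimes b_j+a_i\blacksquare a_j\otimes b_j\otimes b_i\big)$,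 $\mathbf{L}(r)=\sum_{i,j}\big(a_i\otimes a_j\otimes[b_i,b_j]+a_i\otimes[b_i,a_j]\otimes b_j-a_i\square a_j\otimes b_i\otimes b_j\big)$; $r$ is a solution if $\mathbf{P}(r)=\mathbf{L}(r)=0$. *)

(* Coordinate model:
   A   = 'rV[F]_n  (row vectors, dim n)
   V   = 'cV[F]_m  (column vectors, dim m), basis v_k = delta_mx k 0
   V^* = 'rV[F]_m, dual basis v_k^* = delta_mx 0 k, pairing <f,u> = f *m u
   End(V) = 'M[F]_m acting on the left of column vectors.
   Ahat = A (+) V^* = 'rV[F]_(n+m) via row_mx.
   Tensors in Ahat^{(x)2} are matrices 'M_(n+m) (a (x) b = a^T *m b),
   tensors in Ahat^{(x)3} are given by their coordinates (i,j,k). *)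
From HB Require Import structures.
From mathcomp Require Import all_boot all_order all_algebra.
Set Implicit Arguments.
Unset Strict Implicit.
Unset Printing Implicit Defensive.
Import GRing.Theory.
Local Open Scope ring_scope.

Definition bilinear_op (F : fieldType) (d : nat)
  (op : 'rV[F]_d -> 'rV[F]_d -> 'rV[F]_d) : Prop :=
  (forall (a : F) x y z, op (a *: x + y) z = a *: op x z + op y z) /\
  (forall (a : F) x y z, op z (a *: x + y) = a *: op z x + op z y).

Definition dual_prePoisson (F : fieldType) (n : nat)
  (circ br : 'rV[F]_n -> 'rV[F]_n -> 'rV[F]_n) : Prop :=
  bilinear_op circ /\ bilinear_op br /\
  forall x y z,
    circ x (circ y z) = circ (circ x y) z /\
    circ (circ x y) z = circ (circ y x) z /\
    br x (br y z) = br (br x y) z + br y (br x z) /\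
    br x (circ y z) = circ (br x y) z + circ y (br x z) /\
    br (circ x y) z = circ x (br y z) + circ y (br x z) /\
    circ (br x y) z = - circ (br y x) z.

Definition linear_in (F : fieldType) (n m : nat) (f : 'rV[F]_n -> 'M[F]_m) : Prop :=
  forall (a : F) x y, f (a *: x + y) = a *: f x + f y.

Definition is_rep (F : fieldType) (n m : nat)
  (circ br : 'rV[F]_n -> 'rV[F]_n -> 'rV[F]_n)
  (lc rc lb rb : 'rV[F]_n -> 'M[F]_m) : Prop :=
  [/\ linear_in lc, linear_in rc, linear_in lb & linear_in rb] /\
  forall x y,
    rc x *m rc y = rc (circ y x) /\
    rc (circ y x) = lc y *m rc x /\
    lc y *m rc x = rc x *m lc y /\
    lc (circ x y) = lc x *m lc y /\
    lc x *m lc y = lc y *m lc x /\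
    lb (br x y) = lb x *m lb y - lb y *m lb x /\
    rb (br x y) = rb y *m rb x + lb x *m rb y /\
    rb x *m rb y = - (rb x *m lb y) /\
    rb (circ x y) = rc y *m rb x + lc x *m rb y /\
    lb x *m rc y = rc y *m lb x + rc (br x y) /\
    lb x *m lc y = lc (br x y) + lc y *m lb x /\
    rb x *m rc y = rc (br y x) + lc y *m rb x /\
    lb (circ x y) = lc x *m lb y + lc y *m lb x /\
    rb x *m (lc y - rc y) = 0 /\
    rc x *m (lb y + rb y) = 0 /\
    lc (br x y + br y x) = 0.

(* dual action: <f^*(x) v^*, u> = - <v^*, f(x) u> *)
Definition dual_act (F : fieldType) (n m : nat) (f : 'rV[F]_n -> 'M[F]_m)
  (x : 'rV[F]_n) (v : 'rV[F]_m) : 'rV[F]_m := - (v *m f x).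

Definition hat_circ (F : fieldType) (n m : nat)
  (circ : 'rV[F]_n -> 'rV[F]_n -> 'rV[F]_n) (lc rc : 'rV[F]_n -> 'M[F]_m)
  (X Y : 'rV[F]_(n + m)) : 'rV[F]_(n + m) :=
  let x := lsubmx X in let u := rsubmx X in
  let y := lsubmx Y in let v := rsubmx Y in
  row_mx (circ x y) (- dual_act lc x v + (- dual_act lc y u + dual_act rc y u)).

Definition hat_br (F : fieldType) (n m : nat)
  (br : 'rV[F]_n -> 'rV[F]_n -> 'rV[F]_n) (lb rb : 'rV[F]_n -> 'M[F]_m)
  (X Y : 'rV[F]_(n + m)) : 'rV[F]_(n + m) :=
  let x := lsubmx X in let u := rsubmx X in
  let y := lsubmx Y in let v := rsubmx Y in
  row_mx (br x y) (dual_act lb x v - (dual_act lb y u + dual_act rb y u)).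

Definition t3 (F : fieldType) (d : nat) (a b c : 'rV[F]_d) (i j k : 'I_d) : F :=
  a 0 i * b 0 j * c 0 k.

(* coordinates of P(r), L(r) for r = \sum_p a p (x) b p *)
Definition PLYBE_P (F : fieldType) (d : nat) (I : finType)
  (circ : 'rV[F]_d -> 'rV[F]_d -> 'rV[F]_d) (a b : I -> 'rV[F]_d)
  (i j k : 'I_d) : F :=
  \sum_(p : I) \sum_(q : I)
     (t3 (a p) (a q) (circ (b p) (b q)) i j k
      - t3 (a p) (circ (b p) (a q)) (b q) i j k
      + t3 (circ (a p) (a q) - circ (a q) (a p)) (b q) (b p) i j k).

Definition PLYBE_L (F : fieldType) (d : nat) (I : finType)
  (br : 'rV[F]_d -> 'rV[F]_d -> 'rV[F]_d) (a b : I -> 'rV[F]_d)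
  (i j k : 'I_d) : F :=
  \sum_(p : I) \sum_(q : I)
     (t3 (a p) (a q) (br (b p) (b q)) i j k
      + t3 (a p) (br (b p) (a q)) (b q) i j k
      - t3 (br (a p) (a q) + br (a q) (a p)) (b p) (b q) i j k).

(* r : 'M_d is the 2-tensor \sum_{p,q} r p q e_p (x) e_q = \sum_p e_p (x) row p r *)
Definition PLYBE_solution (F : fieldType) (d : nat)
  (circ br : 'rV[F]_d -> 'rV[F]_d -> 'rV[F]_d) (r : 'M[F]_d) : Prop :=
  let a := fun p : 'I_d => (delta_mx 0 p : 'rV[F]_d) in
  let b := fun p : 'I_d => row p r in
  forall i j k, PLYBE_P circ a b i j k = 0 /\ PLYBE_L br a b i j k = 0.

Definition tensor2 (F : fieldType) (d : nat) (a b : 'rV[F]_d) : 'M[F]_d := a^T *m b.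

Definition T_tensor (F : fieldType) (n m : nat) (T : 'cV[F]_m -> 'rV[F]_n)
  : 'M[F]_(n + m) :=
  \sum_(k < m) tensor2 (row_mx (T (delta_mx k 0)) (0 : 'rV[F]_m))
                       (row_mx (0 : 'rV[F]_n) (delta_mx 0 k)).

Definition flip2 (F : fieldType) (d : nat) (t : 'M[F]_d) : 'M[F]_d := t^T.

Definition linear_map (F : fieldType) (n m : nat) (T : 'cV[F]_m -> 'rV[F]_n) : Prop :=
  forall (a : F) u v, T (a *: u + v) = a *: T u + T v.

Definition O_operator (F : fieldType) (n m : nat)
  (circ br : 'rV[F]_n -> 'rV[F]_n -> 'rV[F]_n)
  (lc rc lb rb : 'rV[F]_n -> 'M[F]_m) (T : 'cV[F]_m -> 'rV[F]_n) : Prop :=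
  forall u v,
    circ (T u) (T v) = T (lc (T u) *m v + rc (T v) *m u) /\
    br (T u) (T v) = T (lb (T u) *m v + rb (T v) *m u).

(* Only bilinearity of the operations enters; none of the dual pre-Poisson or
   representation identities is needed.  For a symmetric tensor
   r = \sum_p e_p (x) r_p, the components of P(r) and L(r) are sums of
   coordinates of products r_i . r_j of rows of r.  For r = T + tau(T) the rows
   are (T v_a, 0) at the V^*-indices and (0, T^*(e_c^* )) at the A-indices.  In
   A (+) V^* the product of two elements of V^* vanishes and the product of two
   elements of A lies in A, so the only nonzero components of P(r) and L(r) are
   those with exactly one A-index, and each is a combination of the coordinates
   of the O-operator defects  T u . T v - T (l_.(T u) v + r_.(T v) u)  at basis
   vectors u = v_a, v = v_b.  The (V^*, V^*, A) component is the defect itself,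
   and a bilinear map vanishing on pairs of basis vectors vanishes. *)

From HB Require Import structures.
From mathcomp Require Import all_boot all_order all_algebra ring.
Import GRing.Theory.
Local Open Scope ring_scope.

Set Implicit Arguments.
Unset Strict Implicit.
Unset Printing Implicit Defensive.

Lemma bilinear_op_for (F : fieldType) (d : nat) (op : 'rV[F]_d -> 'rV[F]_d -> 'rV[F]_d) :
  bilinear_op op -> bilinear_for *:%R *:%R op.
Proof. by case=> opl opr; split=> [z a x y | z a x y]; [apply: opl | apply: opr]. Qed.

Lemma split_lshift (n m : nat) (c : 'I_n) : split (lshift m c) = inl c.
Proof. exact: (unsplitK (inl c : 'I_n + 'I_m)). Qed.

Lemma split_rshift (n m : nat) (a : 'I_m) : split (rshift n a) = inr a.
Proof. exact: (unsplitK (inr a : 'I_n + 'I_m)). Qed.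

Lemma sum_delta_coord (F : fieldType) (d : nat) (f : 'I_d -> F) i :
  \sum_p ('e_p : 'rV[F]_d) 0 i * f p = f i.
Proof.
rewrite (bigD1 i) //= big1 => [|p ne_pi]; first by rewrite mxE !eqxx mul1r addr0.
by rewrite mxE eq_sym (negbTE ne_pi) mul0r.
Qed.

Lemma sum2_delta_coord (F : fieldType) (d : nat) (f : 'I_d -> 'I_d -> F) i j :
  \sum_p \sum_q ('e_p : 'rV[F]_d) 0 i * ('e_q : 'rV[F]_d) 0 j * f p q = f i j.
Proof.
under eq_bigr do under eq_bigr do rewrite -mulrA.
under eq_bigr do rewrite -mulr_sumr sum_delta_coord.
exact: sum_delta_coord.
Qed.

Section SymmetricTensor.
Variables (F : fieldType) (d : nat) (op : 'rV[F]_d -> 'rV[F]_d -> 'rV[F]_d) (r : 'M[F]_d).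
Hypothesis op_bilinear : bilinear_for *:%R *:%R op.
Hypothesis r_sym : r^T = r.

HB.instance Definition _ := bilinear_isBilinear.Build F _ _ _ *:%R *:%R op op_bilinear.

Lemma row_symE k : row k r = \sum_q r q k *: 'e_q.
Proof.
rewrite [LHS]row_sum_delta; apply: eq_bigr => q _.
by rewrite mxE -[in LHS]r_sym mxE.
Qed.

Lemma op_row_sym_coord x k i : op x (row k r) 0 i = \sum_q r q k * op x 'e_q 0 i.
Proof.
rewrite row_symE linear_sumr summxE; apply: eq_bigr => q _.
by rewrite linearZr_LR mxE.
Qed.

Lemma op_rows_sym_coord j k i :
  op (row j r) (row k r) 0 i = \sum_p \sum_q op 'e_p 'e_q 0 i * r p j * r q k.
Proof.
rewrite {1}row_symE linear_sumlz summxE; apply: eq_bigr => p _.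
rewrite linearZl_LR mxE op_row_sym_coord mulr_sumr; apply: eq_bigr => q _.
by rewrite mulrA mulrC mulrA.
Qed.

Lemma sum_delta_op_row i j k :
  \sum_p \sum_q ('e_p : 'rV_d) 0 i * op (row p r) 'e_q 0 j * row q r 0 k =
  op (row i r) (row k r) 0 j.
Proof.
under eq_bigr do under eq_bigr do rewrite -mulrA.
under eq_bigr do rewrite -mulr_sumr.
rewrite sum_delta_coord op_row_sym_coord; apply: eq_bigr => q _.
by rewrite mxE mulrC.
Qed.

Lemma PLYBE_P_sym i j k :
  PLYBE_P op (fun p : 'I_d => 'e_p : 'rV[F]_d) (fun p : 'I_d => row p r) i j k =
    op (row i r) (row j r) 0 k - op (row i r) (row k r) 0 j
    + (op (row k r) (row j r) 0 i - op (row j r) (row k r) 0 i).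
Proof.
rewrite /PLYBE_P /t3.
under eq_bigr do rewrite big_split sumrB.
rewrite big_split sumrB /= sum2_delta_coord sum_delta_op_row.
congr (_ + _); rewrite 2!op_rows_sym_coord [in X in _ - X]exchange_big -sumrB.
apply: eq_bigr => p _; rewrite -sumrB; apply: eq_bigr => q _.
by rewrite !mxE; ring.
Qed.

Lemma PLYBE_L_sym i j k :
  PLYBE_L op (fun p : 'I_d => 'e_p : 'rV[F]_d) (fun p : 'I_d => row p r) i j k =
    op (row i r) (row j r) 0 k + op (row i r) (row k r) 0 j
    - (op (row j r) (row k r) 0 i + op (row k r) (row j r) 0 i).
Proof.
rewrite /PLYBE_L /t3.
under eq_bigr do rewrite sumrB big_split.
rewrite sumrB big_split /= sum2_delta_coord sum_delta_op_row.
congr (_ - _); rewrite 2!op_rows_sym_coord [in X in _ + X]exchange_big -big_split.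
apply: eq_bigr => p _; rewrite -big_split; apply: eq_bigr => q _.
by rewrite /= !mxE; ring.
Qed.

End SymmetricTensor.

Definition dual_semidirect (F : fieldType) (n m : nat)
    (op : 'rV[F]_n -> 'rV[F]_n -> 'rV[F]_n) (la ra : 'rV[F]_n -> 'M[F]_m)
    (X Y : 'rV[F]_(n + m)) : 'rV[F]_(n + m) :=
  row_mx (op (lsubmx X) (lsubmx Y))
         (rsubmx Y *m la (lsubmx X) + rsubmx X *m ra (lsubmx Y)).

Lemma dual_semidirect_row_mx (F : fieldType) (n m : nat)
    (op : 'rV[F]_n -> 'rV[F]_n -> 'rV[F]_n) (la ra : 'rV[F]_n -> 'M[F]_m) x u y v :
  dual_semidirect op la ra (row_mx x u) (row_mx y v) =
  row_mx (op x y) (v *m la x + u *m ra y).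
Proof. by rewrite /dual_semidirect !row_mxKl !row_mxKr. Qed.

Lemma hat_circ_semidirect (F : fieldType) (n m : nat)
    (circ : 'rV[F]_n -> 'rV[F]_n -> 'rV[F]_n) (lc rc : 'rV[F]_n -> 'M[F]_m) :
  hat_circ circ lc rc =2 dual_semidirect circ lc (lc \- rc).
Proof. by move=> X Y; rewrite /hat_circ /dual_act !opprK -mulmxBr. Qed.

Lemma hat_br_semidirect (F : fieldType) (n m : nat)
    (br : 'rV[F]_n -> 'rV[F]_n -> 'rV[F]_n) (lb rb : 'rV[F]_n -> 'M[F]_m) :
  hat_br br lb rb =2 dual_semidirect br (\- lb) (lb \+ rb).
Proof. by move=> X Y; rewrite /hat_br /dual_act opprD !opprK -mulmxN -mulmxDr. Qed.

Section DualSemidirectBilinear.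
Variables (F : fieldType) (n m : nat) (op : {bilinear 'rV[F]_n -> 'rV[F]_n -> 'rV[F]_n}).
Variables la ra : {linear 'rV[F]_n -> 'M[F]_m}.

Lemma dual_semidirect_bilinear : bilinear_for *:%R *:%R (dual_semidirect op la ra).
Proof.
split=> [Z | Z] a X Y /=; rewrite /dual_semidirect scale_row_mx add_row_mx.
  rewrite [lsubmx (_ + _)]linearP [rsubmx (_ + _)]linearP linearPl [la _]linearP.
  rewrite mulmxDr mulmxDl -scalemxAr -scalemxAl.
  by congr row_mx; rewrite scalerDr addrACA.
rewrite [lsubmx (_ + _)]linearP [rsubmx (_ + _)]linearP linearPr [ra _]linearP.
rewrite mulmxDr mulmxDl -scalemxAr -scalemxAl.
by congr row_mx; rewrite scalerDr addrACA.
Qed.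

Lemma dual_semidirect_AA x y :
  dual_semidirect op la ra (row_mx x 0) (row_mx y 0) = row_mx (op x y) 0.
Proof. by rewrite dual_semidirect_row_mx !mul0mx addr0. Qed.

Lemma dual_semidirect_AV x v :
  dual_semidirect op la ra (row_mx x 0) (row_mx 0 v) = row_mx 0 (v *m la x).
Proof. by rewrite dual_semidirect_row_mx linear0r mul0mx addr0. Qed.

Lemma dual_semidirect_VA u y :
  dual_semidirect op la ra (row_mx 0 u) (row_mx y 0) = row_mx 0 (u *m ra y).
Proof. by rewrite dual_semidirect_row_mx linear0l mul0mx add0r. Qed.

Lemma dual_semidirect_VV u v : dual_semidirect op la ra (row_mx 0 u) (row_mx 0 v) = 0.
Proof.
by rewrite dual_semidirect_row_mx linear0l [la 0]linear0 [ra 0]linear0 !mulmx0 addr0 row_mx0.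
Qed.

End DualSemidirectBilinear.

(* Row [c] of [matT T] is the covector [T^*(e_c^* )] of the paper. *)
Definition matT (F : fieldType) (n m : nat) (T : 'cV[F]_m -> 'rV[F]_n) : 'M[F]_(n, m) :=
  \matrix_(c, l) T (delta_mx l 0) 0 c.

Lemma T_tensorE (F : fieldType) (n m : nat) (T : 'cV[F]_m -> 'rV[F]_n) :
  T_tensor T = block_mx 0 (matT T) 0 0.
Proof.
apply/matrixP => i j; rewrite summxE.
case: (split_ordP i) => c ->; case: (split_ordP j) => l ->;
  under eq_bigr do rewrite /tensor2 mxE big_ord1 mxE ?row_mxEl ?row_mxEr;
  rewrite ?(block_mxEul, block_mxEur, block_mxEdl, block_mxEdr) !mxE.
- by rewrite big1 // => p _; rewrite mulr0.
- by under eq_bigr do rewrite mulrC; rewrite sum_delta_coord.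
- by rewrite big1 // => p _; rewrite mul0r.
- by rewrite big1 // => p _; rewrite mul0r.
Qed.

Lemma T_tensor_symE (F : fieldType) (n m : nat) (T : 'cV[F]_m -> 'rV[F]_n) :
  T_tensor T + flip2 (T_tensor T) = block_mx 0 (matT T) (matT T)^T 0.
Proof. by rewrite /flip2 T_tensorE tr_block_mx !trmx0 add_block_mx !(addr0, add0r). Qed.

Lemma T_tensor_sym_tr (F : fieldType) (n m : nat) (T : 'cV[F]_m -> 'rV[F]_n) :
  (T_tensor T + flip2 (T_tensor T))^T = T_tensor T + flip2 (T_tensor T).
Proof. by rewrite T_tensor_symE tr_block_mx trmxK !trmx0. Qed.

Lemma row_T_tensor_sym_lshift (F : fieldType) (n m : nat) (T : 'cV[F]_m -> 'rV[F]_n) c :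
  row (lshift m c) (T_tensor T + flip2 (T_tensor T)) = row_mx 0 (row c (matT T)).
Proof. by rewrite T_tensor_symE block_mxEv rowKu row_row_mx row0. Qed.

Lemma row_T_tensor_sym_rshift (F : fieldType) (n m : nat) (T : 'cV[F]_m -> 'rV[F]_n) a :
  row (rshift n a) (T_tensor T + flip2 (T_tensor T)) = row_mx (T (delta_mx a 0)) 0.
Proof.
rewrite T_tensor_symE block_mxEv rowKd row_row_mx row0; congr row_mx.
by apply/rowP => c; rewrite !mxE.
Qed.

Section MatrixOfT.
Variables (F : fieldType) (n m : nat) (T : {linear 'cV[F]_m -> 'rV[F]_n}).

Lemma matTE u : T u = (matT T *m u)^T.
Proof.
apply/rowP => c; rewrite [u in LHS]matrix_sum_delta linear_sum summxE !mxE.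
by apply: eq_bigr => l _; rewrite big_ord1 linearZ !mxE mulrC.
Qed.

Lemma row_matT_mulmx c (M : 'M[F]_m) b :
  (row c (matT T) *m M) 0 b = T (M *m delta_mx b 0) 0 c.
Proof. by rewrite -row_mul matTE mulmxA -colE !mxE. Qed.

End MatrixOfT.

Lemma bilinear_delta_eq0 (F : fieldType) (m : nat) (W : lmodType F)
    (f : {bilinear 'cV[F]_m -> 'cV[F]_m -> W}) :
  (forall a b, f (delta_mx a 0) (delta_mx b 0) = 0) -> forall u v, f u v = 0.
Proof.
move=> f_delta u v; rewrite [u]matrix_sum_delta linear_sumlz big1 // => a _.
rewrite big_ord1 linearZl_LR [v]matrix_sum_delta linear_sumr big1 ?scaler0 // => b _.
by rewrite big_ord1 linearZr_LR f_delta scaler0.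
Qed.

Definition O_defect (F : fieldType) (n m : nat) (op : 'rV[F]_n -> 'rV[F]_n -> 'rV[F]_n)
    (l r : 'rV[F]_n -> 'M[F]_m) (T : 'cV[F]_m -> 'rV[F]_n) (u v : 'cV[F]_m) : 'rV[F]_n :=
  op (T u) (T v) - T (l (T u) *m v + r (T v) *m u).

Lemma O_operator_defect (F : fieldType) (n m : nat)
    (circ br : 'rV[F]_n -> 'rV[F]_n -> 'rV[F]_n) (lc rc lb rb : 'rV[F]_n -> 'M[F]_m)
    (T : 'cV[F]_m -> 'rV[F]_n) :
  O_operator circ br lc rc lb rb T <->
  forall u v, O_defect circ lc rc T u v = 0 /\ O_defect br lb rb T u v = 0.
Proof.
split=> O u v; have [Oc Ob] := O u v.
  by rewrite /O_defect Oc Ob !subrr.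
by split; apply: subr0_eq.
Qed.

Section ODefectBilinear.
Variables (F : fieldType) (n m : nat) (op : {bilinear 'rV[F]_n -> 'rV[F]_n -> 'rV[F]_n}).
Variables (l r : {linear 'rV[F]_n -> 'M[F]_m}) (T : {linear 'cV[F]_m -> 'rV[F]_n}).

Lemma O_defect_bilinear : bilinear_for *:%R *:%R (O_defect op l r T).
Proof.
split=> [v | u] a x y /=; rewrite /O_defect.
  rewrite [T (a *: x + y)]linearP linearPl [l _]linearP mulmxDl mulmxDr.
  rewrite -scalemxAl -scalemxAr addrACA -scalerDr [T (_ + _)]linearP.
  by rewrite scalerBr opprD addrACA.
rewrite [T (a *: x + y)]linearP linearPr [r _]linearP mulmxDl mulmxDr.
rewrite -scalemxAl -scalemxAr addrACA -scalerDr [T (_ + _)]linearP.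
by rewrite scalerBr opprD addrACA.
Qed.

HB.instance Definition _ :=
  bilinear_isBilinear.Build F _ _ _ *:%R *:%R (O_defect op l r T) O_defect_bilinear.

Lemma O_defect_eq0 :
  (forall a b, O_defect op l r T (delta_mx a 0) (delta_mx b 0) = 0) ->
  forall u v, O_defect op l r T u v = 0.
Proof. exact: bilinear_delta_eq0. Qed.

End ODefectBilinear.

Section PLYBE_O_operator.
Variables (F : fieldType) (n m : nat).
Variables (circ br : 'rV[F]_n -> 'rV[F]_n -> 'rV[F]_n) (lc rc lb rb : 'rV[F]_n -> 'M[F]_m).
Variable T : 'cV[F]_m -> 'rV[F]_n.
Hypotheses (circ_bil : bilinear_op circ) (br_bil : bilinear_op br).
Hypotheses (lc_lin : linear_in lc) (rc_lin : linear_in rc).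
Hypotheses (lb_lin : linear_in lb) (rb_lin : linear_in rb).
Hypothesis T_lin : linear_map T.

HB.instance Definition _ :=
  bilinear_isBilinear.Build F _ _ _ *:%R *:%R circ (bilinear_op_for circ_bil).
HB.instance Definition _ :=
  bilinear_isBilinear.Build F _ _ _ *:%R *:%R br (bilinear_op_for br_bil).
HB.instance Definition _ := GRing.isLinear.Build F _ _ *:%R lc lc_lin.
HB.instance Definition _ := GRing.isLinear.Build F _ _ *:%R rc rc_lin.
HB.instance Definition _ := GRing.isLinear.Build F _ _ *:%R lb lb_lin.
HB.instance Definition _ := GRing.isLinear.Build F _ _ *:%R rb rb_lin.
HB.instance Definition _ := GRing.isLinear.Build F _ _ *:%R T T_lin.

Lemma hat_circ_bilinear : bilinear_for *:%R *:%R (hat_circ circ lc rc).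
Proof.
have [semi_l semi_r] := dual_semidirect_bilinear circ lc (lc \- rc).
by split=> Z a X Y; rewrite !hat_circ_semidirect; [apply: semi_l | apply: semi_r].
Qed.

Lemma hat_br_bilinear : bilinear_for *:%R *:%R (hat_br br lb rb).
Proof.
have [semi_l semi_r] := dual_semidirect_bilinear br (\- lb) (lb \+ rb).
by split=> Z a X Y; rewrite !hat_br_semidirect; [apply: semi_l | apply: semi_r].
Qed.

Local Notation r := (T_tensor T + flip2 (T_tensor T) : 'M[F]_(n + m)).
Local Notation e := (fun p : 'I_(n + m) => 'e_p : 'rV[F]_(n + m)).
Local Notation Dcirc a b c := (O_defect circ lc rc T (delta_mx a 0) (delta_mx b 0) 0 c).
Local Notation Dbr a b c := (O_defect br lb rb T (delta_mx a 0) (delta_mx b 0) 0 c).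

(* [inl] indexes the coordinates of A, [inr] those of V^* in A (+) V^*. *)
Lemma PLYBE_P_coord i j k :
  PLYBE_P (hat_circ circ lc rc) e (fun p : 'I_(n + m) => row p r) i j k =
  match split i, split j, split k with
  | inr a, inr b, inl c => Dcirc a b c
  | inr a, inl c, inr b => - Dcirc a b c
  | inl c, inr a, inr b => Dcirc b a c - Dcirc a b c
  | _, _, _ => 0
  end.
Proof.
rewrite (PLYBE_P_sym hat_circ_bilinear (T_tensor_sym_tr T)) !hat_circ_semidirect.
case: (split_ordP i) => ? ->; case: (split_ordP j) => ? ->; case: (split_ordP k) => ? ->;
  rewrite !(row_T_tensor_sym_lshift, row_T_tensor_sym_rshift)
    !(dual_semidirect_AA, dual_semidirect_AV, dual_semidirect_VA, dual_semidirect_VV)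
    ?(row_mxEl, row_mxEr) ?row_matT_mulmx /= ?mulmxBl ?[T (_ - _)]linearB
    /O_defect ?[T (_ + _)]linearD !mxE; ring.
Qed.

Lemma PLYBE_L_coord i j k :
  PLYBE_L (hat_br br lb rb) e (fun p : 'I_(n + m) => row p r) i j k =
  match split i, split j, split k with
  | inr a, inr b, inl c => Dbr a b c
  | inr a, inl c, inr b => Dbr a b c
  | inl c, inr a, inr b => - (Dbr a b c + Dbr b a c)
  | _, _, _ => 0
  end.
Proof.
rewrite (PLYBE_L_sym hat_br_bilinear (T_tensor_sym_tr T)) !hat_br_semidirect.
case: (split_ordP i) => ? ->; case: (split_ordP j) => ? ->; case: (split_ordP k) => ? ->;
  rewrite !(row_T_tensor_sym_lshift, row_T_tensor_sym_rshift)
    !(dual_semidirect_AA, dual_semidirect_AV, dual_semidirect_VA, dual_semidirect_VV)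
    ?(row_mxEl, row_mxEr) ?row_matT_mulmx /= ?mulNmx ?mulmxDl
    ?[T (- _)]linearN ?[T (_ + _)]linearD /O_defect ?[T (_ + _)]linearD !mxE; ring.
Qed.

Lemma PLYBE_solution_O_operator :
  PLYBE_solution (hat_circ circ lc rc) (hat_br br lb rb) r <->
  O_operator circ br lc rc lb rb T.
Proof.
rewrite /PLYBE_solution /= O_operator_defect; split=> [sol | D0 i j k].
  suff D0 a b : O_defect circ lc rc T (delta_mx a 0) (delta_mx b 0) = 0 /\
                O_defect br lb rb T (delta_mx a 0) (delta_mx b 0) = 0.
    by move=> u v; split; apply: O_defect_eq0 => a b; have [] := D0 a b.
  have D0c c : Dcirc a b c = 0 /\ Dbr a b c = 0.
    have := sol (rshift n a) (rshift n b) (lshift m c).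
    by rewrite PLYBE_P_coord PLYBE_L_coord split_lshift !split_rshift.
  by split; apply/rowP => c; rewrite [RHS]mxE; [exact: (D0c c).1 | exact: (D0c c).2].
have Dcirc0 a b c : Dcirc a b c = 0 by rewrite (D0 _ _).1 mxE.
have Dbr0 a b c : Dbr a b c = 0 by rewrite (D0 _ _).2 mxE.
rewrite PLYBE_P_coord PLYBE_L_coord.
by case: (split i) => ?; case: (split j) => ?; case: (split k) => ?;
  rewrite ?Dcirc0 ?Dbr0 ?subrr ?addr0 ?oppr0.
Qed.

End PLYBE_O_operator.

Theorem theorem3p21 (F : fieldType) (n m : nat)
  (circ br : 'rV[F]_n -> 'rV[F]_n -> 'rV[F]_n)
  (lc rc lb rb : 'rV[F]_n -> 'M[F]_m)
  (T : 'cV[F]_m -> 'rV[F]_n) :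
  [pchar F] =i pred0 ->
  dual_prePoisson circ br ->
  is_rep circ br lc rc lb rb ->
  linear_map T ->
  (PLYBE_solution (hat_circ circ lc rc) (hat_br br lb rb)
     (T_tensor T + flip2 (T_tensor T))
   <-> O_operator circ br lc rc lb rb T).
Proof.
move=> _ [circ_bil [br_bil _]] [[lc_lin rc_lin lb_lin rb_lin] _] T_lin.
exact: PLYBE_solution_O_operator.
Qed.
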